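(* Let $n\ge3$, let $\boldsymbol\ell=(\ell_1,\ldots,\ell_n)$ be positive lengths, let $\mu\in\mathbb{R}$, and let $\tau$ and $N>0$ be smooth functions on $T^n$ depending only on $s^1$. Consider the conformal data set $(g_{\boldsymbol\ell},\mu\,\sigma^\flat_{\boldsymbol\ell},\tau,N)$. Let $$\tau^*=\frac{\int_{S^1}N\tau\,ds}{\int_{S^1}N\,ds},\qquad \xi=\tau-\tau^*.$$ (1) If $\mu$ and $\tau^*$ are nonzero and have the same sign, then there is a solution $(\phi,W)$ of the CTS-H equations with $\phi\equiv c=(\mu/\tau^* )^{1/q}$, where $W$ is parallel to $\partial_{s^1}$ and $\frac{1}{2N}\mathcal{L}_{g_{\boldsymbol\ell}}W=c^q\xi\,\sigma^\flat_{\boldsymbol\ell}$. The solution of the constraint equations generated by it is $$\bar g=g_{r\boldsymbol\ell},\qquad \bar K=\tau\,(r\ell_1)^2(ds^1)^2,\qquad r=c^{(q-2)/2}=(\mu/\tau^* )^{1/n}.$$ (2) If $\mu=0$ and $\tau^*=0$, then for every $c>0$ there is a solution $(\phi,W)$ of the CTS-H equations with $\phi\equiv c$ and $\frac{1}{2N}\mathcal{L}_{g_{\boldsymbol\ell}}W=c^q\xi\,\sigma^\flat_{\boldsymbol\ell}$, and the associated solution of the constraint equations is $\bar g=g_{r\boldsymbol\ell}$, $\bar K=\tau\,(r\ell_1)^2(ds^1)^2$ with $r=c^{(q-2)/2}$.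
   Context: Let $q=\frac{2n}{n-2}$, $\kappa=\frac{n-1}{n}$. $S^1=\mathbb{R}/\mathbb{Z}$ with unit coordinate $s$ ($\int_{S^1}ds=1$); $T^n=(S^1)^n$ with unit coordinates $(s^1,\ldots,s^n)$; functions of $s^1$ only are identified with functions on $S^1$. $g_{\boldsymbol\ell}=\sum_k\ell_k^2(ds^k)^2$, and $r\boldsymbol\ell=(r\ell_1,\ldots,r\ell_n)$. $\sigma^\flat_{\boldsymbol\ell}=\kappa\ell_1^2(ds^1)^2-\frac1n\sum_{k\ge2}\ell_k^2(ds^k)^2$ (transverse-traceless for $g_{\boldsymbol\ell}$). The conformal Killing operator is $\mathcal{L}_gW=L_Wg-\frac2n(\mathrm{div}_gW)g$. CTS-H method: given $(g,\sigma,\tau,N)$ ($\sigma$ transverse-traceless, $N>0$ a densitized lapse), the CTS-H equations for $\phi>0$ and a vector field $W$ are $$-2\kappa q\Delta_g\phi+R_g\phi-\Big|\sigma+\tfrac{1}{2N}\mathcal{L}_gW\Big|_g^2\phi^{-q-1}+\kappa\tau^2\phi^{q-1}=0,\qquad \mathrm{div}_g\Big(\tfrac{1}{2N}\mathcal{L}_gW\Big)=\kappa\phi^q d\tau,$$ and a solution generates the solution $\bar g=\phi^{q-2}g$, $\bar K=\phi^{-2}(\sigma+\frac{1}{2N}\mathcal{L}_gW)+\frac{\tau}{n}\bar g$ of the Einstein constraint equations $R_{\bar g}-|\bar K|^2+(\mathrm{tr}\bar K)^2=0$, $\mathrm{div}_{\bar g}\bar K=d\,\mathrm{tr}_{\bar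 g}\bar K$. *)

(* T^n = R^n / Z^n: functions / tensor fields on T^n are Z^n-periodic component
   functions in the global coordinates (s^1,...,s^n) (index 0 <-> s^1). *)
From HB Require Import structures.
From mathcomp Require Import all_boot all_order all_algebra.
From mathcomp Require Import all_classical all_reals all_analysis.
Set Implicit Arguments. Unset Strict Implicit. Unset Printing Implicit Defensive.
Import Order.TTheory GRing.Theory Num.Theory.
Import numFieldNormedType.Exports.
Local Open Scope ring_scope.

Section Geom.
Variables (R : realType) (n : nat).

Definition pt := 'rV[R]_n.
Definition fld := pt -> R.
Definition vfield := 'I_n -> fld.
Definition oneform := 'I_n -> fld.
Definition tensor2 := 'I_n -> 'I_n -> fld.

Definition evec (i : 'I_n) : pt := delta_mx 0 i.

Definition pd (i : 'I_n) (f : fld) : fld := fun x => derive f x (evec i).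

Fixpoint iterD (s : seq 'I_n) (f : fld) : fld :=
  match s with [::] => f | i :: s' => pd i (iterD s' f) end.

Definition smooth (f : fld) : Prop := forall s x, differentiable (iterD s f) x.

Definition periodic (f : fld) : Prop := forall x i, f (x + evec i) = f x.

Definition smooth_on_torus (f : fld) : Prop := smooth f /\ periodic f.

Definition only_s1 (f : fld) : Prop :=
  forall x y : pt, (forall i : 'I_n, (i : nat) = 0%N -> x 0 i = y 0 i) -> f x = f y.

Definition s1pt (s : R) : pt := \row_i (if (i : nat) == 0%N then s else 0).

Definition intS1 (f : fld) : R :=
  (\int[lebesgue_measure]_(s in `[0%R, 1%R]) f (s1pt s))%R.

Definition gmx (g : tensor2) (x : pt) : 'M[R]_n := \matrix_(i, j) g i j x.
Definition ginv (g : tensor2) : tensor2 := fun i j x => invmx (gmx g x) i j.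

Definition Gamma (g : tensor2) (k i j : 'I_n) : fld := fun x =>
  2^-1 * \sum_l ginv g k l x *
     (pd i (g j l) x + pd j (g i l) x - pd l (g i j) x).

Definition Ricci (g : tensor2) : tensor2 := fun i j x =>
  \sum_k (pd k (Gamma g k i j) x - pd j (Gamma g k i k) x)
  + \sum_k \sum_l (Gamma g k k l x * Gamma g l i j x
                   - Gamma g k j l x * Gamma g l i k x).

Definition scal (g : tensor2) : fld := fun x =>
  \sum_i \sum_j ginv g i j x * Ricci g i j x.

Definition laplacian (g : tensor2) (f : fld) : fld := fun x =>
  \sum_i \sum_j ginv g i j x *
    (pd i (pd j f) x - \sum_k Gamma g k i j x * pd k f x).

Definition divW (g : tensor2) (W : vfield) : fld := fun x =>
  \sum_i pd i (W i) x + \sum_i \sum_k Gamma g i i k x * W k x.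

Definition lieg (g : tensor2) (W : vfield) : tensor2 := fun i j x =>
  \sum_k (W k x * pd k (g i j) x + g k j x * pd i (W k) x
          + g i k x * pd j (W k) x).

Definition confKilling (g : tensor2) (W : vfield) : tensor2 := fun i j x =>
  lieg g W i j x - 2 / n%:R * divW g W x * g i j x.

(* divergence of a covariant symmetric 2-tensor: (div h)_j = g^{ik} nabla_k h_ij *)
Definition div2 (g : tensor2) (h : tensor2) : oneform := fun j x =>
  \sum_i \sum_k ginv g i k x *
    (pd k (h i j) x - \sum_l Gamma g l k i x * h l j x
                    - \sum_l Gamma g l k j x * h i l x).

Definition norm2 (g : tensor2) (h : tensor2) : fld := fun x =>
  \sum_i \sum_j \sum_a \sum_b ginv g i a x * ginv g j b x * h i j x * h a b x.

Definition trace (g : tensor2) (h : tensor2) : fld := fun x =>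
  \sum_i \sum_j ginv g i j x * h i j x.

Definition dform (f : fld) : oneform := fun i => pd i f.

Definition qexp : R := (2 * n%:R) / (n%:R - 2).
Definition kappa : R := (n%:R - 1) / n%:R.

Definition ctsh_A (g sigma : tensor2) (N : fld) (W : vfield) : tensor2 :=
  fun i j x => sigma i j x + (2 * N x)^-1 * confKilling g W i j x.

Definition CTSH (g sigma : tensor2) (tau N : fld) (phi : fld) (W : vfield) : Prop :=
  (forall x,
     - (2 * kappa * qexp) * laplacian g phi x + scal g x * phi x
     - norm2 g (ctsh_A g sigma N W) x * powR (phi x) (- qexp - 1)
     + kappa * tau x ^+ 2 * powR (phi x) (qexp - 1) = 0) /\
  (forall j x,
     div2 g (fun a b y => (2 * N y)^-1 * confKilling g W a b y) j x
     = kappa * powR (phi x) qexp * dform tau j x).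

Definition gen_g (g : tensor2) (phi : fld) : tensor2 :=
  fun i j x => powR (phi x) (qexp - 2) * g i j x.
Definition gen_K (g sigma : tensor2) (tau N phi : fld) (W : vfield) : tensor2 :=
  fun i j x => powR (phi x) (-2) * ctsh_A g sigma N W i j x
               + tau x / n%:R * gen_g g phi i j x.

Definition constraint_eqs (g K : tensor2) : Prop :=
  (forall x, scal g x - norm2 g K x + trace g K x ^+ 2 = 0) /\
  (forall j x, div2 g K j x = dform (trace g K) j x).

Definition gell (l : 'I_n -> R) : tensor2 :=
  fun i j _ => if i == j then l i ^+ 2 else 0.

Definition sigma_flat (l : 'I_n -> R) : tensor2 :=
  fun i j _ => if i == j then
                 (if (i : nat) == 0%N then kappa * l i ^+ 2 else - n%:R^-1 * l i ^+ 2)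
               else 0.

Definition ds1sq (f : fld) (a : R) : tensor2 :=
  fun i j x => if (i == j) && ((i : nat) == 0%N) then f x * a ^+ 2 else 0.

Definition scaleL (r : R) (l : 'I_n -> R) : 'I_n -> R := fun i => r * l i.

Definition l1 (l : 'I_n -> R) : R := \sum_(i < n | (i : nat) == 0%N) l i.

Definition scale2 (c : R) (f : fld) (h : tensor2) : tensor2 :=
  fun i j x => c * f x * h i j x.

End Geom.

(* With a constant conformal factor phi = c the CTS-H system decouples.  For
   W = W^1 d_{s^1}, the field (2N)^-1 L W equals (N^-1 d_{s^1} W^1) sigma_flat,
   and div (f sigma_flat) = kappa df for f depending on s^1 only; so the momentum
   constraint is the ODE d_{s^1} W^1 = c^q N xi on S^1, which has a periodic
   solution exactly because xi has N-weighted mean zero (this is the definition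
   of tau^* ).  Then sigma + (2N)^-1 L W = c^q tau sigma_flat once mu = c^q tau^*,
   the flat Lichnerowicz equation reduces to c^(2q) c^(-q-1) = c^(q-1), and the
   generated data are the rescaled flat metric together with
   c^(q-2) tau (sigma_flat + g/n) = tau (r l_1)^2 (ds^1)^2. *)

From Pilot Require Import Defs.
From mathcomp Require Import all_boot all_order all_algebra.
From mathcomp Require Import all_classical all_reals all_analysis.
From mathcomp Require Import ring lra.
Import Order.TTheory GRing.Theory Num.Theory.
Import numFieldNormedType.Exports.
Set Implicit Arguments. Unset Strict Implicit. Unset Printing Implicit Defensive.
Local Open Scope ring_scope.

Section Primitive.
Local Open Scope classical_set_scope.
Context {R : realType}.
Local Notation mu := (@lebesgue_measure R).
Variable h : R -> R.
Hypothesis ch : continuous h.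

Local Notation PI a x := (parameterized_integral mu a x h).

Lemma integrable_itv (a b : R) : mu.-integrable `[a, b] (EFin \o h).
Proof.
apply: continuous_compact_integrable; first exact: segment_compact.
exact: continuous_subspaceT.
Qed.

Lemma parameterized_integral_split (a b x : R) : a <= b -> b <= x ->
  PI a x = PI a b + PI b x.
Proof.
move=> ab bx; rewrite /parameterized_integral.
have := @Rintegral_itvB R h (BLeft a) (BRight x) b (integrable_itv a x).
rewrite !bnd_simp => /(_ ab bx).
rewrite Rintegral_itv_obnd_cbnd; last first.
  by apply: integrableS (integrable_itv b x) => //; apply: subset_itvr; rewrite bnd_simp.
by move=> <-; rewrite addrC subrK.
Qed.

Lemma parameterized_integral_diff (a b s : R) :
  a <= Num.min s 0 -> b <= Num.min s 0 -> PI a s - PI a 0 = PI b s - PI b 0.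
Proof.
wlog ab : a b / a <= b.
  move=> H ha hb; case: (lerP a b) => [|/ltW] ?; first exact: H.
  by symmetry; apply: H.
rewrite !le_min => _ /andP[bs b0].
rewrite (parameterized_integral_split ab bs) (parameterized_integral_split ab b0).
by rewrite opprD addrACA subrr add0r.
Qed.

(* Any base point below both [s] and [0] gives the same value (primitiveE). *)
Definition primitive (s : R) : R :=
  PI (- (`|s| + 1)) s - PI (- (`|s| + 1)) 0.

Lemma primitive_lbound (s : R) : - (`|s| + 1) < Num.min s 0.
Proof.
have := lerNnormlW (lexx `|s|); have := normr_ge0 s.
by rewrite lt_min => ? ?; apply/andP; split; lra.
Qed.

Lemma primitiveE (a s : R) : a <= Num.min s 0 -> primitive s = PI a s - PI a 0.
Proof.
by move=> ha; apply: parameterized_integral_diff => //; exact/ltW/primitive_lbound.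
Qed.

Lemma is_derive_primitive (s : R) : is_derive s 1 primitive (h s).
Proof.
pose a := - (`|s| + 1).
have [as_ a0] : a < s /\ a < 0 by apply/andP; rewrite -lt_min primitive_lbound.
have su : s < s + 1 by rewrite ltrDl.
have [dF eF] :=
  continuous_FTC1_closed su (integrable_itv a (s + 1)) as_ (@ch s).
have iF := DeriveDef dF (etrans (esym (derive1E _ _)) eF).
have := is_deriveB iF (is_derive_cst (PI a 0) s 1); rewrite subr0 => hd.
apply: near_eq_is_derive hd; near=> t.
rewrite (@primitiveE a t) // le_min (ltW a0) andbT.
by apply: ltW; near: t; exact: lt_nbhsr.
Unshelve. all: by end_near. Qed.

Lemma primitive0 : primitive 0 = 0.
Proof. exact: subrr. Qed.

Lemma primitive1 : primitive 1 = PI 0 1.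
Proof.
have n10 : -1 <= 0 :> R := lerN10 R.
have hm : -1 <= Num.min 1 0 :> R by rewrite le_min n10 (le_trans n10 ler01).
by rewrite (primitiveE hm) (parameterized_integral_split n10 ler01) addrC addKr.
Qed.

Lemma is_derive_primitive_shift1 (s : R) :
  is_derive s 1 (fun t => primitive (t + 1)) (h (s + 1)).
Proof.
have i1 : is_derive s 1 (fun t : R => t + 1) 1.
  by have := is_deriveD (is_derive_id s 1) (is_derive_cst (1 : R) s 1); rewrite addr0.
have := is_derive1_comp (f := primitive) (g := fun t => t + 1) (x := s).
by move=> /(_ _ _ (is_derive_primitive (s + 1)) i1); rewrite mulr1.
Qed.

Lemma primitive_periodic : (forall s, h (s + 1) = h s) -> PI 0 1 = 0 ->
  forall s, primitive (s + 1) = primitive s.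
Proof.
move=> hper h01 s; apply/eqP; rewrite -subr_eq0; apply/eqP.
have -> : 0 = primitive (0 + 1) - primitive 0 by rewrite add0r primitive1 primitive0 h01 subr0.
apply: (@is_derive_0_is_cst _ (fun t => primitive (t + 1) - primitive t)) => t.
have := is_deriveB (is_derive_primitive_shift1 t) (is_derive_primitive t).
by rewrite hper subrr.
Qed.

Lemma parameterized_integral01_gt0 : (forall s, 0 < h s) -> 0 < PI 0 1.
Proof.
move=> hpos.
suff : 0 < primitive 1 - primitive 0 by rewrite primitive0 subr0 primitive1.
have dP (s : R) : s \in `]0, 1[%R -> is_derive s 1 primitive (h s).
  by move=> _; exact: is_derive_primitive.
have cP : {within `[0, 1], continuous primitive}.
  apply: derivable_within_continuous => s _.
  by case: (is_derive_primitive s).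
by have [c _ ->] := MVT ltr01 dP cP; rewrite subr0 mulr1 hpos.
Qed.

End Primitive.

Section Smooth.
Context {R : realType} {n : nat}.
Local Notation fld := (fld R n).
Implicit Types (f g : fld) (s : seq 'I_n).

Lemma iterD_rcons s i f : Defs.iterD (rcons s i) f = Defs.iterD s (pd i f).
Proof. by elim: s => //= j s ->. Qed.

Lemma pd_cst i (c : R) : pd i (fun _ : pt R n => c) = fun _ => 0.
Proof. by apply/funext => x; exact: derive_cst. Qed.

Lemma pdD i f g x : differentiable f x -> differentiable g x ->
  pd i (fun y => f y + g y) x = pd i f x + pd i g x.
Proof. by move=> /diff_derivable df /diff_derivable dg; exact: deriveD. Qed.

Lemma pdM i f g x : differentiable f x -> differentiable g x ->
  pd i (fun y => f y * g y) x = f x * pd i g x + g x * pd i f x.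
Proof. by move=> /diff_derivable df /diff_derivable dg; exact: deriveM. Qed.

Lemma pd_affine i f (a b : R) x : differentiable f x ->
  pd i (fun y => a * f y + b) x = a * pd i f x.
Proof.
move=> /diff_derivable df; rewrite /pd.
have da := is_deriveZ a (derivableP (df (evec R i))).
by have [_ ->] := is_deriveD da (is_derive_cst b x (evec R i)); rewrite addr0.
Qed.

Lemma smooth_differentiable f x : smooth f -> differentiable f x.
Proof. by move=> sf; exact: (sf [::] x). Qed.

Lemma smooth_pd i f : smooth f -> smooth (pd i f).
Proof. by move=> sf s x; rewrite -iterD_rcons; exact: sf. Qed.

Lemma smooth_of_pd f : (forall x, differentiable f x) ->
  (forall i, smooth (pd i f)) -> smooth f.
Proof.
move=> df sp s; case/lastP: s => [|s i]; first exact: df.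
by rewrite iterD_rcons; exact: sp.
Qed.

Lemma iterD_cst s (c : R) :
  Defs.iterD s (fun _ : pt R n => c) = fun _ => if s is [::] then c else 0.
Proof. by elim: s => [|i s IH] //=; rewrite IH; case: s {IH}; rewrite pd_cst. Qed.

Lemma smooth_cst (c : R) : smooth (fun _ : pt R n => c).
Proof. by move=> s x; rewrite iterD_cst; exact: differentiable_cst. Qed.

Definition smooth_upto k f : Prop :=
  forall s, (size s <= k)%N -> forall x, differentiable (Defs.iterD s f) x.

Lemma smooth_upto_smooth k f : smooth f -> smooth_upto k f.
Proof. by move=> sf s _; exact: sf. Qed.

Lemma iterD_add k s f g : smooth_upto k f -> smooth_upto k g -> (size s <= k)%N ->
  Defs.iterD s (fun y => f y + g y) = fun y => Defs.iterD s f y + Defs.iterD s g y.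
Proof.
move=> sf sg; elim: s => //= i s IH /ltnW hs; rewrite IH //.
by apply/funext => x; apply: pdD; [exact: sf | exact: sg].
Qed.

Lemma smooth_uptoD k f g : smooth_upto k f -> smooth_upto k g ->
  smooth_upto k (fun y => f y + g y).
Proof.
move=> sf sg s hs x; rewrite (iterD_add sf sg hs).
exact: differentiableD (sf s hs x) (sg s hs x).
Qed.

Lemma smoothD f g : smooth f -> smooth g -> smooth (fun y => f y + g y).
Proof.
by move=> sf sg s; apply: (@smooth_uptoD (size s)) => //; exact: smooth_upto_smooth.
Qed.

Lemma smooth_uptoM k f g : smooth f -> smooth g -> smooth_upto k (fun y => f y * g y).
Proof.
elim: k f g => [|k IH] f g sf sg s.
  case: s => // _ x.
  exact: differentiableM (smooth_differentiable x sf) (smooth_differentiable x sg).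
case/lastP: s => [|s i] hs x.
  exact: differentiableM (smooth_differentiable x sf) (smooth_differentiable x sg).
rewrite iterD_rcons.
have -> : pd i (fun y => f y * g y) = fun y => f y * pd i g y + g y * pd i f y.
  by apply/funext => y; apply: pdM; exact: smooth_differentiable.
move: hs; rewrite size_rcons ltnS => hs.
exact: smooth_uptoD (IH _ _ sf (smooth_pd i sg)) (IH _ _ sg (smooth_pd i sf)) _ hs x.
Qed.

Lemma smoothM f g : smooth f -> smooth g -> smooth (fun y => f y * g y).
Proof. by move=> sf sg s; exact: smooth_uptoM sf sg s (leqnn _). Qed.

End Smooth.

Lemma invmx_diag (F : fieldType) (k : nat) (d : 'rV[F]_k) : (forall i, d 0 i != 0) ->
  invmx (diag_mx d) = diag_mx (\row_i (d 0 i)^-1).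
Proof.
move=> hd.
have E : diag_mx d *m diag_mx (\row_i (d 0 i)^-1) = 1%:M.
  rewrite mulmx_diag; apply/matrixP => i j; rewrite !mxE.
  by case: eqVneq => [->|]; rewrite ?mulr1n ?mulfV ?mulr0n.
have [u _] := mulmx1_unit E.
by rewrite -[invmx _]mulmx1 -E mulmxA mulVmx // mul1mx.
Qed.

Lemma sum_supp1 (V : nmodType) (k : nat) (F : 'I_k -> V) i :
  (forall j, j != i -> F j = 0) -> \sum_j F j = F i.
Proof. by move=> hF; rewrite (bigD1 i) //= big1 ?addr0 // => j /hF. Qed.

Section FlatMetric.
Context {R : realType} {n : nat}.
Variable l : 'I_n -> R.
Hypothesis hl : forall i, l i != 0.
Implicit Types (h : tensor2 R n) (x : pt R n).

Lemma ginv_gell a b x : ginv (gell l) a b x = if a == b then (l a ^+ 2)^-1 else 0.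
Proof.
have E : gmx (gell l) x = diag_mx (\row_i l i ^+ 2).
  by apply/matrixP => i j; rewrite !mxE /gell; case: eqVneq => [->|]; rewrite ?mulr1n ?mulr0n.
rewrite /ginv E invmx_diag; last by move=> i; rewrite mxE expf_neq0.
by rewrite !mxE; case: eqVneq => [->|]; rewrite ?mulr1n ?mulr0n.
Qed.

Lemma Gamma_gell k i j : Gamma (gell l) k i j = fun _ => 0.
Proof.
apply/funext => x; rewrite /Gamma big1 ?mulr0 // => a _.
by rewrite !pd_cst addr0 subrr mulr0.
Qed.

Lemma scal_gell x : scal (gell l) x = 0.
Proof.
rewrite /scal big1 // => i _; rewrite big1 // => j _; rewrite /Ricci.
rewrite big1 ?add0r; last by move=> k _; rewrite !Gamma_gell !pd_cst subrr.
by rewrite big1 ?mulr0 // => k _; rewrite big1 // => a _; rewrite !Gamma_gell mul0r subrr.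
Qed.

Lemma laplacian_gell_cst (c : R) x : laplacian (gell l) (fun _ => c) x = 0.
Proof.
rewrite /laplacian big1 // => i _; rewrite big1 // => j _.
by rewrite !pd_cst big1 ?subrr ?mulr0 // => k _; rewrite Gamma_gell mul0r.
Qed.

Lemma norm2_gell_diag h x : (forall a b, a != b -> h a b x = 0) ->
  norm2 (gell l) h x = \sum_i ((l i ^+ 2)^-1 * h i i x) ^+ 2.
Proof.
move=> hoff; rewrite /norm2; apply: eq_bigr => i _.
rewrite (sum_supp1 (i := i)); last first.
  move=> j ji; rewrite big1 // => a _; rewrite big1 // => b _.
  by rewrite (hoff i j) ?mulr0 ?mul0r // eq_sym.
rewrite (sum_supp1 (i := i)); last first.
  by move=> a ai; rewrite big1 // => b _; rewrite ginv_gell eq_sym (negbTE ai) !mul0r.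
rewrite (sum_supp1 (i := i)); last first.
  by move=> b bi; rewrite [ginv _ i b x]ginv_gell eq_sym (negbTE bi) !mulr0 !mul0r.
by rewrite ginv_gell eqxx; ring.
Qed.

Lemma trace_gell_diag h x : trace (gell l) h x = \sum_i (l i ^+ 2)^-1 * h i i x.
Proof.
rewrite /trace; apply: eq_bigr => i _; rewrite (sum_supp1 (i := i)) ?ginv_gell ?eqxx //.
by move=> j ji; rewrite ginv_gell eq_sym (negbTE ji) mul0r.
Qed.

Lemma div2_gell_diag h j x : (forall a b, a != b -> h a b = fun _ => 0) ->
  div2 (gell l) h j x = (l j ^+ 2)^-1 * pd j (h j j) x.
Proof.
move=> hoff; rewrite /div2.
have G0 k i : \sum_a Gamma (gell l) a k i x * h a j x = 0.
  by rewrite big1 // => a _; rewrite Gamma_gell mul0r.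
have G1 k i : \sum_a Gamma (gell l) a k j x * h i a x = 0.
  by rewrite big1 // => a _; rewrite Gamma_gell mul0r.
rewrite (sum_supp1 (i := j)); last first.
  move=> i ij; rewrite big1 // => k _.
  by rewrite G0 G1 (hoff i j ij) pd_cst !subr0 mulr0.
rewrite (sum_supp1 (i := j)); last first.
  by move=> k kj; rewrite ginv_gell eq_sym (negbTE kj) mul0r.
by rewrite G0 G1 !subr0 ginv_gell eqxx.
Qed.

End FlatMetric.

Lemma derive_const_along {R : realType} (V W : normedModType R) (f : V -> W) (x v : V) :
  (forall t : R, f (t *: v + x) = f x) -> 'D_v f x = 0.
Proof.
move=> hf; transitivity ('D_v (cst (f x)) x); last exact: derive_cst.
have E : (fun t : R => t^-1 *: ((f \o shift x) (t *: v) - f x))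
       = (fun t : R => t^-1 *: ((cst (f x) \o shift x) (t *: v) - cst (f x) x)).
  by apply/funext => t /=; rewrite hf.
by rewrite /derive E.
Qed.

Section TorusS1.
Context {R : realType} {m : nat}.
Local Notation n := m.+1.
Local Notation fld := (fld R n).
Variable l : 'I_n -> R.
Hypothesis hl : forall i, l i != 0.

Lemma val_eq0 (i : 'I_n) : ((i : nat) == 0%N) = (i == ord0).
Proof. by []. Qed.

Lemma l1E (k : 'I_n -> R) : l1 k = k ord0.
Proof. by rewrite /l1 (big_pred1 ord0). Qed.

Lemma pd_only_s1 (f : fld) i x : only_s1 f -> i != ord0 -> pd i f x = 0.
Proof.
move=> hf hi; apply: derive_const_along => t; apply: hf => j j0.
have -> : j = ord0 by apply: val_inj.
by rewrite !mxE eqxx /= eq_sym (negbTE hi) mulr0 add0r.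
Qed.

Lemma norm2_sigma_flat (a : fld) x :
  norm2 (gell l) (fun i j y => a y * sigma_flat l i j y) x = a x ^+ 2 * kappa R n.
Proof.
rewrite norm2_gell_diag //; last by move=> i j hij; rewrite /sigma_flat (negbTE hij) mulr0.
rewrite big_ord_recl /sigma_flat eqxx /=.
rewrite (eq_bigr (fun _ => a x ^+ 2 / n%:R ^+ 2)); last first.
  move=> i _; have := hl (lift ord0 i); rewrite eqxx /= -natr1 => hi.
  by field; rewrite natr1 pnatr_eq0 hi.
have := hl ord0; rewrite sumr_const card_ord /kappa -mulr_natr -natr1 => h0.
by field; rewrite natr1 pnatr_eq0 h0.
Qed.

Lemma div2_sigma_flat (a : fld) j x : differentiable a x -> only_s1 a ->
  div2 (gell l) (fun i k y => a y * sigma_flat l i k y) j x = kappa R n * dform a j x.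
Proof.
move=> da ha; rewrite div2_gell_diag //; last first.
  by move=> i k hik; apply/funext => y; rewrite /sigma_flat (negbTE hik) mulr0.
have -> : (fun y => a y * sigma_flat l j j y) = (fun y => sigma_flat l j j x * a y + 0).
  by apply/funext => y; rewrite addr0 mulrC.
rewrite pd_affine // /dform.
case: (eqVneq j ord0) => [->|hj]; last by rewrite (pd_only_s1 _ ha hj) !mulr0.
by rewrite /sigma_flat eqxx /=; have := hl ord0 => h0; field.
Qed.

Lemma sigma_flat_add_gell i j x :
  sigma_flat l i j x + n%:R^-1 * gell l i j x =
  if (i == j) && (i == ord0) then l ord0 ^+ 2 else 0.
Proof.
rewrite /sigma_flat /gell; case: (eqVneq i j) => [->|_] /=; last by rewrite mulr0 addr0.
have n0 : n%:R != 0 :> R by rewrite pnatr_eq0.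
by case: (eqVneq j ord0) => [->|hj] /=; rewrite ?val_eq0 ?(negbTE hj) /kappa; field.
Qed.

Lemma ds1sq_constraint (tau : fld) : smooth tau -> only_s1 tau ->
  constraint_eqs (gell l) (ds1sq tau (l ord0)).
Proof.
move=> st ot.
have off a b : a != b -> ds1sq tau (l ord0) a b = fun _ => 0.
  by move=> hab; apply/funext => y; rewrite /ds1sq (negbTE hab).
have h0 := hl ord0.
have tr : trace (gell l) (ds1sq tau (l ord0)) = tau.
  apply/funext => y; rewrite trace_gell_diag // big_ord_recl big1 ?addr0.
    by rewrite /ds1sq eqxx /=; field.
  by move=> i _; rewrite /ds1sq eqxx /= mulr0.
split => [x|j x].
  rewrite scal_gell // tr norm2_gell_diag //; last by move=> a b /off ->.
  rewrite big_ord_recl big1 ?addr0; last by move=> i _; rewrite /ds1sq eqxx /= mulr0 expr0n.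
  by rewrite /ds1sq eqxx /=; field.
rewrite div2_gell_diag // tr /dform.
case: (eqVneq j ord0) => [->|hj].
  have -> : ds1sq tau (l ord0) ord0 ord0 = fun y => l ord0 ^+ 2 * tau y + 0.
    by apply/funext => y; rewrite /ds1sq eqxx /= addr0 mulrC.
  by rewrite pd_affine; [field | exact: smooth_differentiable].
have -> : ds1sq tau (l ord0) j j = fun _ => 0.
  by apply/funext => y; rewrite /ds1sq eqxx val_eq0 (negbTE hj).
by rewrite pd_cst (pd_only_s1 _ ot hj) mulr0.
Qed.

End TorusS1.

Section S1Potential.
Local Open Scope classical_set_scope.
Context {R : realType} {m : nat}.
Local Notation n := m.+1.
Local Notation fld := (fld R n).
Local Notation mu := (@lebesgue_measure R).

Definition s1_lift (F : R -> R) : fld := fun x => F (x 0 ord0).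

Lemma pd0_s1_lift (F : R -> R) x :
  pd ord0 (s1_lift F) x = F^`() (x 0 ord0).
Proof.
rewrite derive1E /pd /derive; congr (lim (_ @ 0^')); apply/funext => t /=.
by rewrite /s1_lift !mxE eqxx /= -[t%:A]/(t * 1).
Qed.

Lemma pd_s1_lift (F : R -> R) i : i != ord0 -> pd i (s1_lift F) = fun _ => 0.
Proof.
move=> hi; apply/funext => x; apply: derive_const_along => t.
by rewrite /s1_lift !mxE eqxx /= eq_sym (negbTE hi) mulr0 add0r.
Qed.

Lemma s1_lift_periodic (F : R -> R) :
  (forall s, F (s + 1) = F s) -> Defs.periodic (s1_lift F).
Proof.
move=> hF x i; rewrite /s1_lift !mxE eqxx /=.
by case: (ord0 == i); rewrite /= ?mulr1n ?mulr0n ?addr0.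
Qed.

Lemma s1ptE (f : fld) x : only_s1 f -> f x = f (s1pt n (x 0 ord0)).
Proof. by move=> hf; apply: hf => j /(@ord_inj _ j ord0) ->; rewrite mxE. Qed.

Lemma s1pt_shift (s : R) : s1pt n (s + 1) = s1pt n s + evec R ord0.
Proof.
apply/matrixP => i j; rewrite !mxE (ord1 i) eqxx /= -val_eq0.
by case: (_ == 0%N) => /=; rewrite ?mulr1n ?mulr0n ?addr0 ?add0r.
Qed.

Lemma s1pt_continuous (f : fld) : smooth f -> continuous (fun s : R => f (s1pt n s)).
Proof.
move=> sf s.
have -> : (fun s : R => f (s1pt n s)) = f \o ( *:%R^~ (s1pt n 1)).
  apply/funext => t /=; congr f.
  by apply/matrixP => i j; rewrite !mxE; case: ifP; rewrite ?mulr1 ?mulr0.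
apply: continuous_comp; first exact: scalel_continuous.
exact/differentiable_continuous/smooth_differentiable.
Qed.

Lemma intS1_integrable (f : fld) : smooth f ->
  mu.-integrable `[0, 1] (EFin \o (fun s => f (s1pt n s))).
Proof. by move=> sf; exact/integrable_itv/s1pt_continuous. Qed.

Lemma intS1D (f g : fld) : smooth f -> smooth g ->
  intS1 (fun x => f x + g x) = intS1 f + intS1 g.
Proof. by move=> sf sg; rewrite /intS1 RintegralD //; exact: intS1_integrable. Qed.

Lemma intS1Zl (c : R) (f : fld) : smooth f -> intS1 (fun x => c * f x) = c * intS1 f.
Proof. by move=> sf; rewrite /intS1 RintegralZl //; exact: intS1_integrable. Qed.

Lemma intS1_gt0 (f : fld) : smooth f -> (forall x, 0 < f x) -> 0 < intS1 f.
Proof.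
by move=> sf fpos; apply: parameterized_integral01_gt0 => //; exact: s1pt_continuous.
Qed.

Lemma exists_s1_potential (f : fld) :
  smooth_on_torus f -> only_s1 f -> intS1 f = 0 ->
  exists W0 : fld, smooth_on_torus W0 /\ pd ord0 W0 = f /\
    (forall i, i != ord0 -> pd i W0 = fun _ => 0).
Proof.
move=> [sf pf] hf f01.
pose h s := f (s1pt n s).
have ch : continuous h := s1pt_continuous sf.
have hper s : h (s + 1) = h s by rewrite /h s1pt_shift pf.
have P0 : pd ord0 (s1_lift (primitive h)) = f.
  apply/funext => x; rewrite pd0_s1_lift derive1E (s1ptE x hf).
  by have [_ ->] := is_derive_primitive ch (x 0 ord0).
exists (s1_lift (primitive h)); split; last by split => // i; exact: pd_s1_lift.
split; last exact/s1_lift_periodic/primitive_periodic.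
apply: smooth_of_pd => [x|i].
  apply: (differentiable_comp (f := fun y : pt R n => y 0 ord0)).
    exact: differentiable_coord.
  by apply/derivable1_diffP; case: (is_derive_primitive ch (x 0 ord0)).
case: (eqVneq i ord0) => [->|hi]; first by rewrite P0.
by rewrite pd_s1_lift //; exact: smooth_cst.
Qed.

End S1Potential.

Section S1VectorField.
Context {R : realType} {m : nat}.
Local Notation n := m.+1.
Local Notation fld := (fld R n).
Variable l : 'I_n -> R.

Definition s1_vfield (W0 : fld) : vfield R n :=
  fun i => if i == ord0 then W0 else fun _ => 0.

Variable W0 : fld.
Hypothesis hW0 : forall i, i != ord0 -> pd i W0 = fun _ => 0.

Lemma pd_s1_vfield a b x :
  pd a (s1_vfield W0 b) x = if (a == ord0) && (b == ord0) then pd ord0 W0 x else 0.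
Proof.
rewrite /s1_vfield; case: (eqVneq b ord0) => [_|_]; last by rewrite andbF pd_cst.
by case: (eqVneq a ord0) => [->|ha] //; rewrite hW0.
Qed.

Lemma lieg_s1_vfield i j x : lieg (gell l) (s1_vfield W0) i j x =
  if (i == ord0) && (j == ord0) then 2 * l ord0 ^+ 2 * pd ord0 W0 x else 0.
Proof.
rewrite /lieg (eq_bigr (fun k => (if k == j then l k ^+ 2 * pd i (s1_vfield W0 k) x else 0)
    + (if i == k then l i ^+ 2 * pd j (s1_vfield W0 k) x else 0))); last first.
  move=> k _; rewrite pd_cst mulr0 add0r /gell.
  by case: (k == j); case: (i == k); rewrite ?mul0r.
rewrite big_split /= (sum_supp1 (i := j)); last by move=> k /negbTE ->.
rewrite (sum_supp1 (i := i)); last by move=> k; rewrite eq_sym => /negbTE ->.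
rewrite !eqxx !pd_s1_vfield.
case: (eqVneq i ord0) => [->|_]; case: (eqVneq j ord0) => [->|_] /=;
  by rewrite ?mulr0 ?addr0 //; ring.
Qed.

Lemma divW_s1_vfield x : divW (gell l) (s1_vfield W0) x = pd ord0 W0 x.
Proof.
rewrite /divW (sum_supp1 (i := ord0)); last by move=> k hk; rewrite pd_s1_vfield (negbTE hk).
rewrite pd_s1_vfield eqxx big1 ?addr0 // => i _.
by rewrite big1 // => k _; rewrite Gamma_gell mul0r.
Qed.

Lemma confKilling_s1_vfield i j x :
  confKilling (gell l) (s1_vfield W0) i j x = 2 * pd ord0 W0 x * sigma_flat l i j x.
Proof.
rewrite /confKilling lieg_s1_vfield divW_s1_vfield /gell /sigma_flat.
case: (eqVneq i j) => [<-|hij]; last first.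
  have /negbTE -> : ~~ ((i == ord0) && (j == ord0)).
    by apply: contra hij => /andP[/eqP -> /eqP ->].
  by rewrite !mulr0 subr0.
rewrite andbb val_eq0 /kappa.
by case: (eqVneq i ord0) => [->|_] /=; field; rewrite addrC natr1 pnatr_eq0.
Qed.

End S1VectorField.

Section ConstantSolution.
Context {R : realType} {m : nat}.
Local Notation n := m.+1.
Local Notation fld := (fld R n).
Local Notation q := (qexp R n).
Variables (l : 'I_n -> R) (tau N W0 : fld) (mu taus c : R).
Hypotheses (hl : forall i, l i != 0) (htau : smooth tau) (htau1 : only_s1 tau).
Hypotheses (hNpos : forall x, 0 < N x) (hc : 0 < c) (hmu : mu = powR c q * taus).
Hypothesis hW0 : pd ord0 W0 = fun x => powR c q * (N x * (tau x - taus)).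
Hypothesis hWi : forall i, i != ord0 -> pd i W0 = fun _ => 0.

Local Notation sigma := (scale2 mu (fun _ => 1) (sigma_flat l)).
Local Notation W := (s1_vfield W0).

Lemma confKilling_solution i j x :
  (2 * N x)^-1 * confKilling (gell l) W i j x =
  scale2 (powR c q) (fun y => tau y - taus) (sigma_flat l) i j x.
Proof.
rewrite confKilling_s1_vfield // hW0 /scale2.
by have N0 := lt0r_neq0 (hNpos x); field.
Qed.

Lemma ctsh_A_solution : ctsh_A (gell l) sigma N W =
  fun i j y => powR c q * tau y * sigma_flat l i j y.
Proof.
apply/funext => i; apply/funext => j; apply/funext => y.
by rewrite /ctsh_A confKilling_solution /scale2 hmu; ring.
Qed.

Lemma CTSH_solution : CTSH (gell l) sigma tau N (fun _ => c) W.
Proof.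
have cq : powR c q * powR c q * powR c (- q - 1) = powR c (q - 1).
  by rewrite -!powRD ?(gt_eqF hc) ?implybT //; congr powR; ring.
split => [x|j x].
  rewrite laplacian_gell_cst scal_gell // ctsh_A_solution.
  rewrite (norm2_sigma_flat hl (fun y => powR c q * tau y)) -cq; ring.
have -> : (fun i k y => (2 * N y)^-1 * confKilling (gell l) W i k y)
    = fun i k y => powR c q * (tau y - taus) * sigma_flat l i k y.
  by apply/funext => i; apply/funext => k; apply/funext => y; rewrite confKilling_solution.
rewrite (div2_sigma_flat hl); last first.
- by move=> y z hyz; rewrite (htau1 hyz).
- apply/smooth_differentiable/smoothM; first exact: smooth_cst.
  exact: smoothD htau (smooth_cst _).
have -> : (fun y => powR c q * (tau y - taus))
    = fun y => powR c q * tau y + - (powR c q * taus).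
  by apply/funext => y; ring.
by rewrite /dform pd_affine ?mulrA //; exact: smooth_differentiable.
Qed.

Local Notation r := (powR c ((q - 2) / 2)).

Lemma powR_conformal_factor : r ^+ 2 = powR c (q - 2).
Proof. by rewrite expr2 -powRD ?(gt_eqF hc) ?implybT //; congr powR; field. Qed.

Lemma gen_g_const : gen_g (gell l) (fun _ => c) = gell (scaleL r l).
Proof.
apply/funext => i; apply/funext => j; apply/funext => x.
rewrite /gen_g /gell /scaleL; case: (i == j); last by rewrite mulr0.
by rewrite exprMn powR_conformal_factor.
Qed.

Lemma gen_K_solution : gen_K (gell l) sigma tau N (fun _ => c) W = ds1sq tau (r * l1 l).
Proof.
have c2 : powR c (-2) * powR c q = powR c (q - 2).
  by rewrite -powRD ?(gt_eqF hc) ?implybT // addrC.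
apply/funext => i; apply/funext => j; apply/funext => x.
transitivity (tau x * r ^+ 2 * (sigma_flat l i j x + n%:R^-1 * gell l i j x)).
  by rewrite /gen_K ctsh_A_solution /gen_g powR_conformal_factor -c2; ring.
rewrite sigma_flat_add_gell /ds1sq l1E val_eq0.
by case: ifP => _; ring.
Qed.

Lemma constraint_solution : constraint_eqs (gen_g (gell l) (fun _ => c))
  (gen_K (gell l) sigma tau N (fun _ => c) W).
Proof.
rewrite gen_g_const gen_K_solution l1E.
apply: (ds1sq_constraint (l := scaleL r l)) => // i.
by rewrite /scaleL mulf_neq0 // gt_eqF // powR_gt0.
Qed.

End ConstantSolution.

Lemma qexp_neq0 {R : realType} (n : nat) : (2 < n)%N -> qexp R n != 0.
Proof.
move=> hn; have n2 : n%:R - 2 != 0 :> R by rewrite subr_eq0 -[2]/(2%:R) eqr_nat gtn_eqF.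
by rewrite /qexp !mulf_neq0 ?invr_neq0 // pnatr_eq0 -lt0n (ltnW (ltnW hn)).
Qed.

Lemma qexp_conformal_exp {R : realType} (n : nat) : (2 < n)%N ->
  (qexp R n)^-1 * ((qexp R n - 2) / 2) = n%:R^-1.
Proof.
move=> hn; have n2 : n%:R - 2 != 0 :> R by rewrite subr_eq0 -[2]/(2%:R) eqr_nat gtn_eqF.
have n0 : n%:R != 0 :> R by rewrite pnatr_eq0 -lt0n (ltnW (ltnW hn)).
by rewrite /qexp; field; rewrite n0 n2.
Qed.

Lemma exists_ctsh_constant_solution {R : realType} {m : nat}
  (l : 'I_m.+1 -> R) (hl : forall i, l i != 0) (tau N : fld R m.+1)
  (htau : smooth_on_torus tau) (htau1 : only_s1 tau)
  (hN : smooth_on_torus N) (hN1 : only_s1 N) (hNpos : forall x, 0 < N x)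
  (mu c : R) (hc : 0 < c) :
  let taus := intS1 (fun x => N x * tau x) / intS1 N in
  let q := qexp R m.+1 in
  let sigma := scale2 mu (fun _ => 1) (sigma_flat l) in
  let r := powR c ((q - 2) / 2) in
  mu = powR c q * taus ->
  exists W : vfield R m.+1,
    (forall i, smooth_on_torus (W i)) /\
    (forall i : 'I_m.+1, (i : nat) <> 0%N -> forall x, W i x = 0) /\
    CTSH (gell l) sigma tau N (fun _ => c) W /\
    (forall i j x, (2 * N x)^-1 * confKilling (gell l) W i j x
                   = scale2 (powR c q) (fun x => tau x - taus) (sigma_flat l) i j x) /\
    gen_g (gell l) (fun _ => c) = gell (scaleL r l) /\
    gen_K (gell l) sigma tau N (fun _ => c) W = ds1sq tau (r * l1 l) /\
    constraint_eqs (gen_g (gell l) (fun _ => c))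
                   (gen_K (gell l) sigma tau N (fun _ => c) W).
Proof.
move=> taus q sigma r hmu.
pose f x := powR c q * (N x * (tau x - taus)).
have sf : smooth f.
  apply: smoothM (smooth_cst _) _; apply: smoothM hN.1 _.
  exact: smoothD htau.1 (smooth_cst _).
have f1 : only_s1 f by move=> x y hxy; rewrite /f (htau1 _ _ hxy) (hN1 _ _ hxy).
have fper : Defs.periodic f by move=> x i; rewrite /f htau.2 hN.2.
have f0 : intS1 f = 0.
  have IN : intS1 N != 0 := lt0r_neq0 (intS1_gt0 hN.1 hNpos).
  have sNt : smooth (fun x => N x * tau x) := smoothM hN.1 htau.1.
  have stN : smooth (fun x => - taus * N x) := smoothM (smooth_cst _) hN.1.
  have -> : f = fun x => powR c q * (N x * tau x + - taus * N x).
    by apply/funext => x; rewrite /f; ring.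
  rewrite intS1Zl; last exact: smoothD.
  by rewrite intS1D // (intS1Zl _ hN.1) mulNr /taus divfK // addrN mulr0.
have [W0 [sW0 [P0 Pi]]] := exists_s1_potential (conj sf fper) f1 f0.
exists (s1_vfield W0); split.
  move=> i; rewrite /s1_vfield; case: ifP => // _.
  by split; [exact: smooth_cst | move=> x j].
split; first by move=> i /eqP hi x; rewrite /s1_vfield ifN.
split; first exact (CTSH_solution hl htau.1 htau1 hNpos hc hmu P0 Pi).
split; first exact (confKilling_solution l hNpos P0 Pi).
split; first exact (gen_g_const l hc).
split; first exact (gen_K_solution l hNpos hc hmu P0 Pi).
exact (constraint_solution hl htau.1 htau1 hNpos hc hmu P0 Pi).
Qed.

Unset Implicit Arguments.

Theorem proposition6p1 (R : realType) (n : nat) (hn : (3 <= n)%N)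
  (l : 'I_n -> R) (hl : forall i, 0 < l i) (mu : R)
  (tau N : pt R n -> R)
  (htau : smooth_on_torus tau) (htau1 : only_s1 tau)
  (hN : smooth_on_torus N) (hN1 : only_s1 N) (hNpos : forall x, 0 < N x) :
  let taus := intS1 (fun x => N x * tau x) / intS1 N in
  let xi := fun x => tau x - taus in
  let q := qexp R n in
  let sigma := scale2 mu (fun _ => 1) (sigma_flat l) in
  (* (1) *)
  (((0 < mu /\ 0 < taus) \/ (mu < 0 /\ taus < 0)) ->
     let c := powR (mu / taus) q^-1 in
     let r := powR c ((q - 2) / 2) in
     exists W : vfield R n,
       (forall i, smooth_on_torus (W i)) /\
       (forall i : 'I_n, (i : nat) <> 0%N -> forall x, W i x = 0) /\
       CTSH (gell l) sigma tau N (fun _ => c) W /\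
       (forall i j x, (2 * N x)^-1 * confKilling (gell l) W i j x
                      = scale2 (powR c q) xi (sigma_flat l) i j x) /\
       gen_g (gell l) (fun _ => c) = gell (scaleL r l) /\
       gen_K (gell l) sigma tau N (fun _ => c) W = ds1sq tau (r * l1 l) /\
       constraint_eqs (gen_g (gell l) (fun _ => c))
                      (gen_K (gell l) sigma tau N (fun _ => c) W) /\
       r = powR (mu / taus) n%:R^-1) /\
  (* (2) *)
  (mu = 0 -> taus = 0 ->
     forall c : R, 0 < c ->
     let r := powR c ((q - 2) / 2) in
     exists W : vfield R n,
       (forall i, smooth_on_torus (W i)) /\
       CTSH (gell l) sigma tau N (fun _ => c) W /\
       (forall i j x, (2 * N x)^-1 * confKilling (gell l) W i j x
                      = scale2 (powR c q) xi (sigma_flat l) i j x) /\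
       gen_g (gell l) (fun _ => c) = gell (scaleL r l) /\
       gen_K (gell l) sigma tau N (fun _ => c) W = ds1sq tau (r * l1 l) /\
       constraint_eqs (gen_g (gell l) (fun _ => c))
                      (gen_K (gell l) sigma tau N (fun _ => c) W)).
Proof.
case: n => [//|m] in hn l hl tau N htau htau1 hN hN1 hNpos *.
move=> taus xi q sigma.
have hl0 i : l i != 0 := lt0r_neq0 (hl i).
have solution := exists_ctsh_constant_solution hl0 htau htau1 hN hN1 hNpos.
split=> [hsign c r | mu0 taus0 c hc r].
- have hpos : 0 < mu / taus.
    case: hsign => [[mu0 t0]|[mu0 t0]]; first exact: divr_gt0.
    by rewrite -divrNN divr_gt0 // oppr_gt0.
  have taus0 : taus != 0 by apply: contraTneq hpos => ->; rewrite invr0 mulr0 ltxx.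
  have hc : 0 < c := powR_gt0 _ hpos.
  have hmu : mu = powR c q * taus.
    by rewrite /c -powRrM mulVf ?qexp_neq0 // powRr1 ?ltW ?divfK.
  have [W [? [? [? [? [? [? ?]]]]]]] := solution mu c hc hmu.
  exists W; do 7 (split => //).
  by rewrite /r /c -powRrM qexp_conformal_exp.
- have hmu : mu = powR c q * taus by rewrite mu0 taus0 mulr0.
  have [W [? [_ [? [? [? [? ?]]]]]]] := solution mu c hc hmu.
  by exists W.
Qed.
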